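(* Let $P$ be a Markov kernel on a measurable space $(\mathsf{X},\mathcal{X})$. Suppose there exist $C\in\mathcal{X}$, $\epsilon>0$ and a probability measure $\nu$ with $P(x,\cdot)\ge\epsilon\nu(\cdot)$ for all $x\in C$, and let $Q$ be the residual kernel ($Q(x,A)=(1-\epsilon)^{-1}(P(x,A)-\epsilon\nu(A))$ if $0<\epsilon<1$, $Q=\nu$ if $\epsilon=1$). Suppose further that there exist a function $W_0:\mathsf{X}\to[1,\infty)$, a function $\phi_0\in\mathcal{C}$ and a constant $b_0$ such that $PW_0\leq W_0-\phi_0\circ W_0+b_0\mathbb{1}_C$. Let $d_0=\inf_{x\notin C}W_0(x)$. Define the kernel $\check P$ on $\mathsf{X}\times\mathsf{X}$ by $$\check P(x,x';A\times A')=P(x,A)P(x',A')\mathbb{1}_{(C\times C)^c}(x,x')+Q(x,A)Q(x',A')\mathbb{1}_{C\times C}(x,x').$$ If $\phi_0(d_0)>b_0$, then, with $W(x,x')=W_0(x)+W_0(x')-1$ and $\phi=\lambda\phi_0$ for any $\lambda$ with $0<\lambda<1-b_0/\phi_0(d_0)$, one has $\check PW(x,x')\leq W(x,x')-\phi(W(x,x'))$ for all $(x,x')\notin C\times C$, and $$\sup_{C\times C}\check PW\leq 2(1-\epsilon)^{-1}\Big\{\sup_C PW_0-\epsilon\nu(W_0)\Big\}-1.$$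
   Context: $\mathcal{C}$ is the set of functions $\phi:[1,\infty)\to\mathbb{R}^+$ that are concave and differentiable with $\phi(1)>0$, $\lim_{v\to\infty}\phi(v)=\infty$ and $\lim_{v\to\infty}\phi'(v)=0$. $\nu(W_0)=\int W_0\,d\nu$. *)

From HB Require Import structures.
From mathcomp Require Import all_boot all_order all_algebra.
From mathcomp Require Import all_classical all_reals all_analysis.
Set Implicit Arguments. Unset Strict Implicit. Unset Printing Implicit Defensive.
Import Order.TTheory GRing.Theory Num.Theory.
Import numFieldNormedType.Exports.
Local Open Scope classical_set_scope.
Local Open Scope ring_scope.

Definition class_C (R : realType) (phi : R -> R) : Prop :=
  (forall v, 1 <= v -> 0 <= phi v) /\
      (forall x y t, 1 <= x -> 1 <= y -> 0 <= t <= 1 ->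
          t * phi x + (1 - t) * phi y <= phi (t * x + (1 - t) * y)) /\
  (forall v, 1 < v -> derivable phi v 1) /\
  0 < phi 1 /\
  phi x @[x --> +oo] --> +oo /\
  derive1 phi x @[x --> +oo] --> (0 : R).

(* The split chain kernel \check P on X * X: for (x,x') outside C x C it is
   the product measure P(x,.) (x) P(x',.), on C x C it is Q(x,.) (x) Q(x',.).
   (A product measure is determined by its values on rectangles.) *)
Definition check_kernel d (X : measurableType d) (R : realType)
  (C : set X) (P Q : X -> set X -> \bar R) (xx : X * X) : set (X * X) -> \bar R :=
  if `[< C xx.1 /\ C xx.2 >] then (Q xx.1 \x Q xx.2)%E
  else (P xx.1 \x P xx.2)%E.

Definition check_kernel_fun d (X : measurableType d) (R : realType)
  (C : set X) (P Q : X -> set X -> \bar R) (W : X * X -> R) (xx : X * X) : \bar R :=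
  (\int[check_kernel C P Q xx]_z (W z)%:E)%E.

From HB Require Import structures.
From mathcomp Require Import all_boot all_order all_algebra.
From mathcomp Require Import all_classical all_reals all_analysis.
From mathcomp Require Import lra ring measurable_realfun.
Import Order.TTheory GRing.Theory Num.Theory.
Import numFieldNormedType.Exports.
Local Open Scope classical_set_scope.
Local Open Scope ring_scope.

(** By Fubini, \check P W at (x,x') is P W0 x + P W0 x' - 1 (resp. with Q).
    Off C x C one point, say x, lies outside C, so W0 x >= d0 and
    P W0 x <= W0 x - phi0 (W0 x); at x' we only lose the constant b0.  Since
    phi0 is concave with phi0 1 >= 0 it is subadditive in the form
    phi0 (a + b - 1) <= phi0 a + phi0 b, so
    lam * phi0 (W) <= phi0 (W0 x) + phi0 (W0 x') - (1 - lam) * phi0 d0,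
    and (1 - lam) * phi0 d0 > b0 absorbs the constant.  On C x C the identity
    Q = (P - eps nu) / (1 - eps) turns Q W0 into (P W0 - eps nu(W0)) / (1 - eps). *)

Section kernel_probability.
Context {d d' : measure_display} {X : measurableType d} {Y : measurableType d'}
  {R : realType}.
Variables (P : R.-pker X ~> Y) (x : X).

(* The library only gives [P x] the structure of a measure. *)
Definition kernel_prob : set Y -> \bar R := P x.

HB.instance Definition _ := Measure.copy kernel_prob (P x).
HB.instance Definition _ :=
  Measure_isProbability.Build _ _ _ kernel_prob (@prob_kernel _ _ _ _ _ P x).

End kernel_probability.

Section probability_integral.
Local Open Scope ereal_scope.
Context {d : measure_display} {T : measurableType d} {R : realType}.
Implicit Types (m : probability T R) (f : T -> \bar R) (c : \bar R).

Lemma ge0_integral_prob_addr m f c : measurable_fun setT f ->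
  (forall x, 0 <= f x) -> 0 <= c ->
  \int[m]_x (f x + c) = \int[m]_x f x + c.
Proof.
move=> mf f0 c0.
rewrite ge0_integralD// integral_cst// -[in RHS](mule1 c).
by congr (_ + c * _); exact: probability_setT.
Qed.

Lemma ge0_integral_prob_subr m (g : T -> R) (c : R) : measurable_fun setT g ->
  (0 <= c)%R -> (forall x, c <= g x)%R ->
  \int[m]_x (g x - c)%:E = \int[m]_x (g x)%:E - c%:E.
Proof.
move=> mg c0 cg.
have gc0 x : 0 <= (g x - c)%:E by rewrite lee_fin subr_ge0.
have -> : \int[m]_x (g x)%:E = \int[m]_x ((g x - c)%:E + c%:E).
  by apply: eq_integral => x _; rewrite -EFinD subrK.
rewrite ge0_integral_prob_addr ?lee_fin// ?addeK//.
by apply/measurable_EFinP; exact: measurable_funB.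
Qed.

End probability_integral.

Section product_integral.
Local Open Scope ereal_scope.
Context {d1 d2 : measure_display} {T1 : measurableType d1} {T2 : measurableType d2}
  {R : realType}.

Lemma ge0_integral_prod_add (m1 : probability T1 R) (m2 : probability T2 R)
    (f : T1 -> R) (g : T2 -> R) :
  measurable_fun setT f -> measurable_fun setT g ->
  (forall x, 0 <= f x)%R -> (forall y, 0 <= g y)%R ->
  \int[m1 \x m2]_z (f z.1 + g z.2)%:E = \int[m1]_x (f x)%:E + \int[m2]_y (g y)%:E.
Proof.
move=> mf mg f0 g0.
have mfE : measurable_fun setT (EFin \o f) by exact/measurable_EFinP.
have mgE : measurable_fun setT (EFin \o g) by exact/measurable_EFinP.
rewrite fubini_tonelli1; last 2 first.
- apply/measurable_EFinP; apply: measurable_funD.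
  + exact: measurableT_comp mf measurable_fst.
  + exact: measurableT_comp mg measurable_snd.
- by move=> z; rewrite lee_fin addr_ge0.
transitivity (\int[m1]_x ((f x)%:E + \int[m2]_y (g y)%:E)).
  apply: eq_integral => x _; rewrite /fubini_F /=.
  under eq_integral do rewrite EFinD addeC.
  by rewrite ge0_integral_prob_addr ?lee_fin// addeC.
by rewrite ge0_integral_prob_addr// integral_ge0// => y _; rewrite lee_fin.
Qed.

End product_integral.

Lemma integral_prod_add_sub1 {d} {T : measurableType d} {R : realType}
    (m1 m2 : probability T R) (W0 : T -> R) :
  measurable_fun setT W0 -> (forall x, 1 <= W0 x) ->
  (\int[m1 \x m2]_z (W0 z.1 + W0 z.2 - 1)%:E =
   \int[m1]_x (W0 x)%:E + \int[m2]_y (W0 y)%:E - 1)%E.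
Proof.
move=> mW W1.
under eq_integral do rewrite addrAC.
rewrite (ge0_integral_prod_add m1 m2 (fun x => W0 x - 1)%R W0).
rewrite ge0_integral_prob_subr // addeAC//.
- exact: measurable_funB mW (measurable_cst _).
- exact: mW.
- by move=> x; rewrite subr_ge0.
- by move=> y; apply: le_trans (W1 y).
Qed.

Section class_C_theory.
Context {R : realType} {phi : R -> R}.
Hypothesis phiC : class_C phi.

Let phi_ge0 {v} : 1 <= v -> 0 <= phi v.
Proof. by case: phiC => ge0 _; exact: ge0. Qed.

Let phi_concave {x y t} : 1 <= x -> 1 <= y -> 0 <= t <= 1 ->
  t * phi x + (1 - t) * phi y <= phi (t * x + (1 - t) * y).
Proof. by case: phiC => _ [concave _]; exact: concave. Qed.

Lemma class_C_homo u v : 1 <= u -> u <= v -> phi u <= phi v.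
Proof.
move=> u1 uv; rewrite leNgt; apply/negP => phi_vu.
have {uv}uv : u < v.
  by rewrite lt_neqAle uv andbT; apply: contraTneq phi_vu => ->; rewrite ltxx.
have [M [_ phiM]] : exists M, M \is Num.real /\ forall z, M < z -> phi u <= phi z.
  by case: phiC => _ [_ [_ [_ [/cvgryPge/(_ (phi u)) + _]]]].
pose z := Num.max (M + 1) (v + 1).
have Mz : M < z by rewrite lt_max ltrDl ltr01.
have vz : v < z by rewrite lt_max orbC ltrDl ltr01.
pose t := (z - v) / (z - u).
have zu : 0 < z - u by rewrite subr_gt0 (lt_trans uv).
have t01 : 0 <= t <= 1.
  by rewrite divr_ge0 ?ler_pdivrMr// ?mul1r; lra.
have tE : t * u + (1 - t) * z = v by rewrite /t; field; lra.
have := phi_concave u1 (le_trans u1 (ltW (lt_trans uv vz))) t01.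
rewrite tE => phi_v.
have : 0 <= (1 - t) * (phi z - phi u).
  by apply: mulr_ge0; [lra | rewrite subr_ge0 phiM].
lra.
Qed.

Lemma class_C_chord a s : 1 <= a <= s -> (a - 1) * phi s <= (s - 1) * phi a.
Proof.
move=> /andP[a1 as_].
have [s1|s1] := eqVneq s 1.
  have -> : a = 1 by lra.
  by rewrite s1 subrr !mul0r.
have s1_gt0 : 0 < s - 1 by rewrite subr_gt0 lt_neqAle eq_sym s1 /=; lra.
pose t := (a - 1) / (s - 1).
have t01 : 0 <= t <= 1 by rewrite divr_ge0 ?ler_pdivrMr// ?mul1r; lra.
have tE : t * s + (1 - t) * 1 = a by rewrite /t; field; lra.
have := phi_concave (le_trans a1 as_) (lexx 1) t01.
rewrite tE => phi_a.
have : 0 <= (1 - t) * phi 1 by apply: mulr_ge0; [lra | exact: phi_ge0].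
have -> : (a - 1) * phi s = (s - 1) * (t * phi s) by rewrite /t; field; lra.
by move=> ?; rewrite ler_wpM2l ?(ltW s1_gt0)//; lra.
Qed.

Lemma class_C_subadd a b : 1 <= a -> 1 <= b -> phi (a + b - 1) <= phi a + phi b.
Proof.
move=> a1 b1; have [s1|s1] := eqVneq (a + b - 1) 1.
  rewrite s1; have := phi_ge0 (lexx 1).
  have -> : a = 1 by lra.
  have -> : b = 1 by lra.
  lra.
have s1_gt0 : 0 < a + b - 1 - 1 by rewrite subr_gt0 lt_neqAle eq_sym s1 /=; lra.
rewrite -(ler_pM2l s1_gt0).
have /class_C_chord ha : 1 <= a <= a + b - 1 by apply/andP; split; lra.
have /class_C_chord hb : 1 <= b <= a + b - 1 by apply/andP; split; lra.
lra.
Qed.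

Lemma class_C_pair_drift (lam b dd u v : R) :
  0 <= lam <= 1 -> 1 <= dd <= u -> 1 <= v -> b < (1 - lam) * phi dd ->
  (u - phi u) + (v - phi v + b) - 1 <= (u + v - 1) - lam * phi (u + v - 1).
Proof.
move=> /andP[lam0 lam1] /andP[dd1 ddu] v1 b_lt.
have lam1' : 0 <= 1 - lam by rewrite subr_ge0.
have := ler_wpM2l lam0 (class_C_subadd _ _ (le_trans dd1 ddu) v1).
have := ler_wpM2l lam1' (class_C_homo _ _ dd1 ddu).
have := mulr_ge0 lam1' (phi_ge0 v1).
lra.
Qed.

End class_C_theory.

Section mixture.
Local Open Scope ereal_scope.
Context {d : measure_display} {T : measurableType d} {R : realType}.

Lemma ge0_integral_mixture (m m1 m2 : measure T R) (a b : R) (g : T -> \bar R) :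
  (0 <= a)%R -> (0 <= b)%R ->
  (forall A, measurable A -> m A = a%:E * m1 A + b%:E * m2 A) ->
  measurable_fun setT g -> (forall x, 0 <= g x) ->
  \int[m]_x g x = a%:E * \int[m1]_x g x + b%:E * \int[m2]_x g x.
Proof.
move=> a0 b0 mE mg g0.
rewrite (eq_measure_integral (measure_add (mscale (NngNum a0) m1)
                                          (mscale (NngNum b0) m2))).
  by rewrite ge0_integral_measure_add// !ge0_integral_mscale.
by move=> A mA _; rewrite mE//; symmetry; exact: measure_addE.
Qed.

Let fin_num_pmull {c : R} x :
  (0 < c)%R -> c%:E * x \is a fin_num -> x \is a fin_num.
Proof.
move=> c0; case: x => [x||]//; [rewrite mulry | rewrite mulrNy].
all: by rewrite gtr0_sg ?mul1e.
Qed.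

Lemma integral_residual (P Q nu : probability T R) (eps : R) (g : T -> R) :
  (0 < eps < 1)%R ->
  (forall A, measurable A -> Q A = ((1 - eps)^-1)%:E * (P A - eps%:E * nu A)) ->
  measurable_fun setT g -> (forall x, 0 <= g x)%R ->
  \int[P]_x (g x)%:E \is a fin_num ->
  \int[Q]_x (g x)%:E =
  ((1 - eps)^-1)%:E * (\int[P]_x (g x)%:E - eps%:E * \int[nu]_x (g x)%:E).
Proof.
move=> /andP[eps0 eps1] QE mg g0 Pfin.
have eps1' : (0 < 1 - eps)%R by rewrite subr_gt0.
have PE : forall A, measurable A -> P A = (1 - eps)%:E * Q A + eps%:E * nu A.
  move=> A mA; rewrite QE//.
  have /EFin_fin_numP[p ->] : P A \is a fin_num by exact: fin_num_measure.
  have /EFin_fin_numP[n ->] : nu A \is a fin_num by exact: fin_num_measure.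
  by rewrite -EFinM -EFinM -EFinD; congr EFin; field; lra.
have mix : \int[P]_x (g x)%:E =
    (1 - eps)%:E * \int[Q]_x (g x)%:E + eps%:E * \int[nu]_x (g x)%:E.
  apply: ge0_integral_mixture (ltW eps1') (ltW eps0) PE _ _.
  - exact/measurable_EFinP.
  - by move=> x; rewrite lee_fin.
move: Pfin; rewrite mix fin_numD => /andP[].
move=> /(fin_num_pmull _ eps1')/EFin_fin_numP[q ->].
move=> /(fin_num_pmull _ eps0)/EFin_fin_numP[n ->].
by rewrite addeK// -!EFinM; congr EFin; field; lra.
Qed.

End mixture.

Section drift.
Context {d : measure_display} {X : measurableType d} {R : realType}.
Context {P : R.-pker X ~> X} {C : set X} {W0 : X -> R} {phi0 : R -> R} {b0 : R}.
Hypotheses (mW0 : measurable_fun setT W0) (W0_ge1 : forall x, 1 <= W0 x)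
  (phi0C : class_C phi0)
  (drift : forall x, (\int[P x]_y (W0 y)%:E <=
                      (W0 x - phi0 (W0 x) + b0 * \1_C x)%:E)%E).

(* If b0 <= 0, then inf W0 <= P W0 x <= W0 x - phi0 1 for every x. *)
Lemma drift_const_gt0 (x0 : X) : 0 < b0.
Proof.
rewrite ltNge; apply/negP => b0_le0.
have W0x0 : range W0 !=set0 by exists (W0 x0), x0.
have lbW0 : has_lbound (range W0) by exists 1 => _ [y _ <-].
set m := inf (range W0).
have m_ge1 : 1 <= m by apply: lb_le_inf => // _ [y _ <-].
have phi01 : 0 < phi0 1 by case: phi0C => _ [_ [_ []]].
suff : m + phi0 1 <= m by lra.
apply: lb_le_inf => // _ [x _ <-].
have m_le y : m <= W0 y by apply: ge_inf => //; exists y.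
have m_le_PW0 : (m%:E <= \int[kernel_prob P x]_y (W0 y)%:E)%E.
  rewrite -sube_ge0// -ge0_integral_prob_subr ?(le_trans _ m_ge1)//.
  by apply: integral_ge0 => y _; rewrite lee_fin subr_ge0.
have := le_trans m_le_PW0 (drift x); rewrite lee_fin.
have := class_C_homo phi0C _ _ (lexx 1) (W0_ge1 x).
have := mulr_le0_ge0 b0_le0 (_ : 0 <= \1_C x); rewrite indicE ler0n => /(_ isT).
lra.
Qed.

Lemma drift_le_const x : (\int[P x]_y (W0 y)%:E <= (W0 x - phi0 (W0 x) + b0)%:E)%E.
Proof.
apply: le_trans (drift x) _; rewrite lee_fin lerD2l indicE.
by case: (x \in C); rewrite ?mulr1 ?mulr0 // ltW // (drift_const_gt0 x).
Qed.

Lemma drift_notin x : ~ C x -> (\int[P x]_y (W0 y)%:E <= (W0 x - phi0 (W0 x))%:E)%E.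
Proof. by move=> nCx; have := drift x; rewrite indicE memNset // mulr0 addr0. Qed.

Lemma drift_fin_num x : (\int[P x]_y (W0 y)%:E)%E \is a fin_num.
Proof.
rewrite ge0_fin_numE ?(le_lt_trans (drift x)) ?ltey //.
by apply: integral_ge0 => y _; rewrite lee_fin (le_trans _ (W0_ge1 y)).
Qed.

Local Notation W := (fun xx : X * X => W0 xx.1 + W0 xx.2 - 1).

Lemma check_kernel_fun_le_offCC (Q : X -> set X -> \bar R) (lam dd : R) xx :
  0 <= lam <= 1 -> 1 <= dd -> (forall x, ~ C x -> dd <= W0 x) ->
  b0 < (1 - lam) * phi0 dd -> ~ (C xx.1 /\ C xx.2) ->
  (check_kernel_fun C (fun x => P x) Q W xx <= (W xx - lam * phi0 (W xx))%:E)%E.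
Proof.
case: xx => x1 x2 /= lam01 dd1 ddW0 b0_lt nC.
rewrite /check_kernel_fun /check_kernel /= asboolF //.
rewrite (integral_prod_add_sub1 (kernel_prob P x1) (kernel_prob P x2)) //.
wlog nCx1 : x1 x2 nC / ~ C x1.
  move=> wlog_nC; have [Cx1|] := pselect (C x1); last exact: wlog_nC.
  rewrite (addeC (\int[kernel_prob P x1]_y (W0 y)%:E)%E) (addrC (W0 x1)).
  by apply: wlog_nC => [[C2 C1]|C2]; apply: nC.
apply: le_trans (leeD2r _ (leeD (drift_notin _ nCx1) (drift_le_const x2))) _.
rewrite -EFinD lee_fin.
by apply: (class_C_pair_drift phi0C _ _ dd); rewrite ?dd1 ?ddW0.
Qed.

Lemma check_kernel_fun_le_onCC (nu : probability X R) (Q : X -> probability X R)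
    eps xx :
  0 < eps < 1 ->
  (forall x A, C x -> measurable A ->
     Q x A = (((1 - eps)^-1)%:E * (P x A - eps%:E * nu A))%E) ->
  C xx.1 -> C xx.2 ->
  (check_kernel_fun C (fun x => P x) (fun x => Q x) W xx <=
   2%:E * ((1 - eps)^-1)%:E *
     (ereal_sup [set \int[P x]_y (W0 y)%:E | x in C] -
      eps%:E * \int[nu]_y (W0 y)%:E) - 1)%E.
Proof.
case: xx => x1 x2 /= eps01 QE C1 C2.
set S := ereal_sup _.
have c_ge0 : (0 <= ((1 - eps)^-1)%:E)%E.
  by rewrite lee_fin invr_ge0 subr_ge0; case/andP: eps01 => _ /ltW.
have QW0_le x : C x -> (\int[Q x]_y (W0 y)%:E <=
    ((1 - eps)^-1)%:E * (S - eps%:E * \int[nu]_y (W0 y)%:E))%E.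
  move=> Cx.
  rewrite (integral_residual (kernel_prob P x) (Q x) nu _ _ eps01 (QE x ^~ Cx)) //.
  - apply: lee_wpmul2l => //; apply: leeB => //.
    by apply: ereal_sup_ubound; exists x.
  - by move=> y; rewrite (le_trans _ (W0_ge1 y)).
  - exact: drift_fin_num.
rewrite /check_kernel_fun /check_kernel /= asboolT //.
rewrite integral_prod_add_sub1 // -muleA mule_natl mule2n.
by apply: leeD2r; apply: leeD; apply: QW0_le.
Qed.

End drift.

Theorem theorem3 (d : measure_display) (X : measurableType d) (R : realType)
  (P : R.-pker X ~> X) (C : set X) (eps : R) (nu : probability X R)
  (Q : X -> probability X R)
  (W0 : X -> R) (phi0 : R -> R) (b0 lam : R) :
  measurable C ->
  0 < eps ->
  (forall x A, C x -> measurable A -> (eps%:E * nu A <= P x A)%E) ->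
  (* residual kernel Q (only its values on C are relevant) *)
  (eps < 1 -> forall x A, C x -> measurable A ->
     Q x A = (((1 - eps)^-1)%:E * (P x A - eps%:E * nu A))%E) ->
  (eps = 1 -> forall x A, C x -> measurable A -> Q x A = nu A) ->
  measurable_fun setT W0 ->
  (forall x, 1 <= W0 x) ->
  class_C phi0 ->
  (forall x, (\int[P x]_y (W0 y)%:E <=
              (W0 x - phi0 (W0 x) + b0 * \1_C x)%:E)%E) ->
  let d0 := inf [set W0 x | x in ~` C] in
  (* phi0(d0) > b0, with the convention d0 = +oo (phi0(d0) = +oo) if C = X *)
  ((exists x, ~ C x) -> b0 < phi0 d0) ->
  0 < lam ->
  ((exists x, ~ C x) -> lam < 1 - b0 / phi0 d0) ->
  (~ (exists x, ~ C x) -> lam < 1) ->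
  let W := fun xx : X * X => W0 xx.1 + W0 xx.2 - 1 in
  let phi := fun v => lam * phi0 v in
  (forall xx : X * X, ~ (C xx.1 /\ C xx.2) ->
     (check_kernel_fun C (fun x => P x) (fun x => Q x) W xx <= (W xx - phi (W xx))%:E)%E) /\
  (eps < 1 ->
     (ereal_sup [set check_kernel_fun C (fun x => P x) (fun x => Q x) W xx | xx in [set xx | C xx.1 /\ C xx.2]]
      <= 2%:E * ((1 - eps)^-1)%:E *
         (ereal_sup [set \int[P x]_y (W0 y)%:E | x in C]
          - eps%:E * \int[nu]_y (W0 y)%:E) - 1)%E).
Proof.
(* The minorization only guarantees that Q is a probability kernel, which is
   assumed outright. *)
move=> _ eps0 _ QE _ mW0 W0_ge1 phi0C drift d0 b0_lt lam0 lam_lt _ W phi.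
split=> [xx nC|eps1].
- have nCx : exists x, ~ C x.
    have [C1|] := pselect (C xx.1); last by exists xx.1.
    by exists xx.2 => C2; apply: nC.
  have [x0 nCx0] := nCx.
  have lbW0 : has_lbound [set W0 x | x in ~` C] by exists 1 => _ [y _ <-].
  have d0_ge1 : 1 <= d0.
    by apply: lb_le_inf => [|_ [y _ <-]]; [exists (W0 x0), x0 |].
  have d0_le x : ~ C x -> d0 <= W0 x by move=> nCx'; apply: ge_inf => //; exists x.
  have b0_gt0 := drift_const_gt0 mW0 W0_ge1 phi0C drift xx.1.
  have phi0d0 : 0 < phi0 d0 := lt_trans b0_gt0 (b0_lt nCx).
  have lam_lt' := lam_lt nCx.
  have b0d0_gt0 := divr_gt0 b0_gt0 phi0d0.
  apply: (check_kernel_fun_le_offCC mW0 W0_ge1 phi0C drift) d0_ge1 d0_le _ nC.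
  - by apply/andP; split; lra.
  - by rewrite -ltr_pdivrMr //; lra.
- apply: ge_ereal_sup => _ [xx [C1 C2] <-].
  apply: (check_kernel_fun_le_onCC mW0 W0_ge1 drift _ _ _ _ _ (QE eps1) C1 C2).
  by rewrite eps0 eps1.
Qed.
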